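(* Let $(P,\theta)$ be an X-program with $P$ an $n\times l$ binary matrix, let $\mathbf{X}$ be its output random variable, and let $m$ be a projector on $\mathbb{F}_2^l$ with range $R$, such that the range of the dual map $m^*$ is $R^*$. Then for every $\mathbf{x}\in R$, \[ \mathbb{P}[m(\mathbf{X})=\mathbf{x}]=\mathbb{E}_{\mathbf{s}\in R^*}\big[(-1)^{\mathbf{x}\cdot\mathbf{s}}\cdot\alpha_{(P_{\mathbf{s}},2\theta)}\big], \] where $\mathbb{E}_{\mathbf{s}\in R^*}$ denotes the average over $\mathbf{s}$ uniform in $R^*$.
   Context: An X-program $(P,\theta)$: $P$ is an $n\times l$ matrix over $\mathbb{F}_2$, $\theta\in\mathbb{R}$, $\mathbf{H}_P=\sum_{a=1}^n\prod_{b=1}^lX_b^{P_{ab}}$ on $l$ qubits ($X_b$ Pauli $X$ on qubit $b$), and $\mathbf{X}$ is the random variable on $\mathbb{F}_2^l$ with $\mathbb{P}[\mathbf{X}=\mathbf{x}]=|\langle\mathbf{x}|\exp(i\theta\mathbf{H}_P)|\mathbf{0}\rangle|^2$. A projector is a linear map $m:\mathbb{F}_2^l\to\mathbb{F}_2^l$ with $m^2=m$ (not necessarily orthogonal); $K$ and $R$ are its kernel and range, and $m^*$ is its dual (transpose) with respect to the standard inner product $\mathbf{x}\cdot\mathbf{y}$. The marginal distribution is $\mathbb{P}[m(\mathbf{X})=\mathbf{x}]=[\mathbf{x}\in R]\sum_{\mathbf{k}\in K}\mathbb{P}[\mathbf{X}=\mathbf{x}+\mathbf{k}]$. For $\mathbf{s}\in\mathbb{F}_2^l$,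 $P_{\mathbf{s}}$ is the matrix obtained from $P$ by deleting all rows $\mathbf{a}$ with $\mathbf{a}\cdot\mathbf{s}=0$. For a binary matrix $M$ with $n'$ rows and rank $r$, $\mathcal{C}(M)\subseteq\mathbb{F}_2^{n'}$ is the span of its columns, $W_{\mathcal{C}}(\zeta)=\sum_{\mathbf{c}\in\mathcal{C}}\zeta^{|\mathbf{c}|}$ with $|\mathbf{c}|$ the Hamming weight, and $\alpha_{(M,\phi)}=2^{-r}e^{i\phi n'}W_{\mathcal{C}(M)}(e^{-2i\phi})$. *)

From HB Require Import structures.
From mathcomp Require Import all_boot all_order all_algebra.
From mathcomp Require Import all_classical all_reals all_analysis.
From mathcomp Require Import complex.
Set Implicit Arguments.
Unset Strict Implicit.
Unset Printing Implicit Defensive.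
Import Order.TTheory GRing.Theory Num.Theory.
Import numFieldNormedType.Exports.
Local Open Scope ring_scope.
Local Open Scope complex_scope.

Notation bvec l := 'rV['F_2]_l.

Definition dotF (l : nat) (x y : bvec l) : 'F_2 := (x *m y^T) 0 0.

(* matrix element <x| H_P |y> of H_P = sum_a prod_b X_b^{P_ab}:
   the Pauli string prod_b X_b^{P_ab} maps |y> to |y + row a P>. *)
Definition Hmat (R : realType) (n l : nat) (P : 'M['F_2]_(n, l))
    (x y : bvec l) : R[i] :=
  \sum_(a < n) (x == y + row a P)%:R.

Fixpoint Hpow (R : realType) (n l : nat) (P : 'M['F_2]_(n, l)) (k : nat)
    (x y : bvec l) : R[i] :=
  match k with
  | 0 => (x == y)%:R
  | k'.+1 => \sum_(z : bvec l) Hmat R P x z * Hpow R P k' z y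
  end.

(* <x| exp(i theta H_P) |0> = sum_k (i theta)^k / k! <x|H_P^k|0>
   (entry of the exponential series of the operator i theta H_P) *)
Definition amp (R : realType) (n l : nat) (P : 'M['F_2]_(n, l)) (theta : R)
    (x : bvec l) : R[i] :=
  limn (series ((fun k => ('i * theta%:C) ^+ k / (k`!)%:R * Hpow R P k x 0)
                 : nat -> (R[i] : numFieldType))).

Definition probX (R : realType) (n l : nat) (P : 'M['F_2]_(n, l)) (theta : R)
    (x : bvec l) : R[i] :=
  `|amp P theta x| ^+ 2.

(* A projector m on F_2^l is represented by a matrix M acting on row vectors:
   m(x) = x *m M, with M *m M = M.  Its dual (w.r.t. x.y = x *m y^T) is
   m^*(y) = y *m M^T. *)
Definition proj_range (l : nat) (M : 'M['F_2]_l) : {set bvec l} :=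
  [set x *m M | x : bvec l].
Definition proj_dual_range (l : nat) (M : 'M['F_2]_l) : {set bvec l} :=
  [set y *m M^T | y : bvec l].

Definition marginal (R : realType) (n l : nat) (P : 'M['F_2]_(n, l))
    (theta : R) (M : 'M['F_2]_l) (x : bvec l) : R[i] :=
  \sum_(y : bvec l | y *m M == x) probX P theta y.

(* P_s : rows a of P with a . s = 1, in their original order *)
Definition rows_s (n l : nat) (P : 'M['F_2]_(n, l)) (s : bvec l) : {set 'I_n} :=
  [set a : 'I_n | dotF (row a P) s == 1].
Definition Psub (n l : nat) (P : 'M['F_2]_(n, l)) (s : bvec l) :
    'M['F_2]_(#|rows_s P s|, l) :=
  rowsub (fun i : 'I_#|rows_s P s| => enum_val i) P.

Definition colspan (n' l : nat) (M : 'M['F_2]_(n', l)) : {set 'cV['F_2]_n'} :=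
  [set M *m v | v : 'cV['F_2]_l].
Definition hweight (n' : nat) (c : 'cV['F_2]_n') : nat :=
  #|[set i : 'I_n' | c i 0 != 0]|.

Definition weight_enum (R : realType) (n' : nat) (C : {set 'cV['F_2]_n'})
    (zeta : R[i]) : R[i] :=
  \sum_(c in C) zeta ^+ hweight c.

Definition expi (R : realType) (phi : R) : R[i] := cos phi +i* sin phi.

Definition alpha (R : realType) (n' l : nat) (M : 'M['F_2]_(n', l)) (phi : R)
    : R[i] :=
  (2 ^+ \rank M)^-1 * expi (phi * n'%:R) *
  weight_enum (colspan M) (expi (- (2 * phi))).

From HB Require Import structures.
From mathcomp Require Import all_boot all_order all_algebra.
From mathcomp Require Import all_classical all_reals all_analysis.
From mathcomp Require Import complex ring mxabelem.
Import Order.TTheory GRing.Theory Num.Theory.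
Import numFieldNormedType.Exports.
Set Implicit Arguments.
Unset Strict Implicit.
Unset Printing Implicit Defensive.
Local Open Scope ring_scope.
Local Open Scope complex_scope.

(* The Hamiltonian H_P is diagonal in the Fourier basis of F_2^l: the character
   x |-> (-1)^(x.s) is an eigenvector of eigenvalue lam s = sum_a (-1)^(P_a.s).
   Hence <x|exp(i theta H_P)|0> = 2^-l sum_s (-1)^(x.s) e^(i theta lam s) and
   P[X = y] = 2^-2l sum_u (-1)^(y.u) sum_s e^(i theta (lam s - lam (u - s))).
   Since lam s - lam (u - s) = 2 (|P_u| - 2 wt(P_u s)), the inner sum only
   depends on the codeword P_u s, and counting the s behind each codeword gives
   2^l alpha_(P_u, 2 theta).  Summing P[X = y] over the coset x + ker m kills
   every u outside (ker m)^perp = R^*, and |ker m| |R^*| = 2^l. *)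

Definition sgF2 {T : pzRingType} (a : 'F_2) : T := (-1) ^+ (a == 1).

Lemma F2_cases (a : 'F_2) : a = 0 \/ a = 1.
Proof. by case: a => [[|[|//]]] Ha; [left|right]; apply: val_inj. Qed.

Section SignCharacter.
Variable T : pzRingType.

Lemma sgF2_0 : sgF2 0 = 1 :> T.
Proof. by []. Qed.

Lemma sgF2_1 : sgF2 1 = -1 :> T.
Proof. by rewrite /sgF2 eqxx expr1. Qed.

Lemma sgF2D (a b : 'F_2) : sgF2 (a + b) = sgF2 a * sgF2 b :> T.
Proof.
by case: (F2_cases a) => ->; case: (F2_cases b) => ->;
  rewrite /sgF2 /= ?expr0 ?expr1 ?mul1r ?mulr1 ?mulrNN ?mulr1.
Qed.

Lemma sgF2N (a : 'F_2) : sgF2 (- a) = sgF2 a :> T.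
Proof.
by case: (F2_cases a) => ->; rewrite ?oppr0 // [- 1](_ : _ = 1) //; apply/eqP.
Qed.

Lemma sgF2B (a b : 'F_2) : sgF2 (a - b) = sgF2 a * sgF2 b :> T.
Proof. by rewrite sgF2D sgF2N. Qed.

Lemma sgF2E (a : 'F_2) : sgF2 a = 1 - 2 * (a != 0)%:R :> T.
Proof.
case: (F2_cases a) => ->; first by rewrite /sgF2 /= expr0 mulr0 subr0.
by rewrite /sgF2 /= expr1 mulr1 opprD addrA subrr add0r.
Qed.

Lemma rmorph_sgF2 (U : pzRingType) (f : {rmorphism T -> U}) (a : 'F_2) :
  f (sgF2 a) = sgF2 a.
Proof. by rewrite /sgF2 rmorphXn rmorphN1. Qed.

End SignCharacter.

Lemma addmx_F2_self (m k : nat) (x : 'M['F_2]_(m, k)) : x + x = 0.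
Proof.
by apply/matrixP => i j; rewrite !mxE; case: (F2_cases (x i j)) => ->; apply/eqP.
Qed.

Section DotProduct.
Variable l : nat.
Implicit Types x y s t : 'rV['F_2]_l.

Lemma dotFDl x y s : dotF (x + y) s = dotF x s + dotF y s.
Proof. by rewrite /dotF mulmxDl mxE. Qed.

Lemma dotFBl x y s : dotF (x - y) s = dotF x s - dotF y s.
Proof. by apply: (addIr (dotF y s)); rewrite -dotFDl !subrK. Qed.

Lemma dotFC x y : dotF x y = dotF y x.
Proof. by rewrite /dotF -[x *m _]trmxK trmx_mul trmxK mxE. Qed.

Lemma dotFDr x s t : dotF x (s + t) = dotF x s + dotF x t.
Proof. by rewrite dotFC dotFDl !(dotFC x). Qed.

Lemma dotFBr x s t : dotF x (s - t) = dotF x s - dotF x t.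
Proof. by rewrite dotFC dotFBl !(dotFC x). Qed.

Lemma dotF0l s : dotF 0 s = 0.
Proof. by rewrite /dotF mul0mx mxE. Qed.

Lemma dotF_delta x (j : 'I_l) : dotF (delta_mx 0 j) x = x 0 j.
Proof.
rewrite /dotF mxE (bigD1 j) //= big1 ?addr0; first by rewrite !mxE !eqxx mul1r.
by move=> k /negbTE nk; rewrite !mxE nk andbF mul0r.
Qed.

Lemma card_rV_F2 : #|[set: 'rV['F_2]_l]| = (2 ^ l)%N.
Proof. by rewrite cardsT card_mx card_Fp // mul1n. Qed.

End DotProduct.

Section CharacterSums.
Variables (T : numDomainType) (l : nat).
Local Notation V := 'rV['F_2]_l.

Lemma sum_sgF2_addr_closed (K : {set V}) (u : V) :
  (forall a b, a \in K -> b \in K -> a + b \in K) ->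
  \sum_(k in K) (sgF2 (dotF k u) : T) =
  if [forall k in K, dotF k u == 0] then #|K|%:R else 0.
Proof.
move=> Kadd; case: ifP => [/forallP K_perp | /negbT].
  rewrite (eq_bigr (fun _ => 1)) ?sumr_const // => k Kk.
  by rewrite (eqP (implyP (K_perp k) Kk)).
rewrite negb_forall => /existsP[k0]; rewrite negb_imply => /andP[Kk0 k0u].
have {}k0u : dotF k0 u = 1 by case: (F2_cases (dotF k0 u)) k0u => ->.
set S := \sum_(k in K) _.
suff : S = - S by move/eqP; rewrite -subr_eq0 opprK -mulr2n mulrn_eq0 => /eqP.
(* translation by k0 permutes K and flips every sign *)
rewrite {1}/S (reindex_inj (addIr k0)) /=.
rewrite (eq_bigl (mem K)) => [|k]; last first.
  apply/idP/idP => Kk; last exact: Kadd.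
  by have := Kadd _ _ Kk Kk0; rewrite -addrA addmx_F2_self addr0.
rewrite /S -sumrN; apply: eq_bigr => k _.
by rewrite dotFDl sgF2D k0u sgF2_1 mulrN1.
Qed.

Lemma sum_sgF2_dotF (x : V) :
  \sum_s (sgF2 (dotF x s) : T) = (x == 0)%:R * (2 ^ l)%:R.
Proof.
under eq_bigr do rewrite dotFC.
have <- : \sum_(s in [set: V]) (sgF2 (dotF s x) : T) = \sum_s sgF2 (dotF s x).
  by apply: eq_bigl => s; rewrite inE.
rewrite sum_sgF2_addr_closed ?card_rV_F2; last by move=> a b _ _; rewrite inE.
have [->|nx] := eqVneq x 0.
  by rewrite ifT ?mul1r //; apply/forall_inP => k _; rewrite dotFC dotF0l.
rewrite ifF ?mul0r //; apply/negbTE/forall_inPn.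
have [j xj] : exists j, x 0 j != 0.
  apply/existsP; move: nx; apply: contraR; rewrite negb_exists => /forallP x0.
  by apply/eqP/matrixP => i j; rewrite ord1 mxE; apply/eqP/negbNE/x0.
by exists (delta_mx 0 j); rewrite ?inE // dotF_delta.
Qed.

End CharacterSums.

Definition kerset l (M : 'M['F_2]_l) : {set 'rV['F_2]_l} := [set k | k *m M == 0].

Section Projector.
Variables (l : nat) (M : 'M['F_2]_l).
Hypothesis MM : M *m M = M.
Local Notation V := 'rV['F_2]_l.

Lemma kerset_addr_closed a b : a \in kerset M -> b \in kerset M -> a + b \in kerset M.
Proof. by rewrite !inE mulmxDl => /eqP-> /eqP->; rewrite addr0. Qed.

Lemma kerset_orthogonal (u : V) :
  [forall k in kerset M, dotF k u == 0] = (u \in proj_dual_range M).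
Proof.
apply/forall_inP/imsetP => [K_perp | [v _ ->] k]; last first.
  by rewrite inE => /eqP Mk; rewrite /dotF trmx_mul trmxK mulmxA Mk mul0mx mxE.
(* y - yM lies in the kernel, so y.u = (yM).u for every y; take y = e_j *)
have dotM y : dotF y u = dotF (y *m M) u.
  apply/eqP; rewrite -subr_eq0 -dotFBl; apply: K_perp.
  by rewrite inE mulmxBl -mulmxA MM subrr.
exists u => //; apply/matrixP => i j; rewrite ord1.
have := dotM (delta_mx 0 j); rewrite /dotF -!rowE -row_mul.
rewrite [row j u^T 0 0]mxE [u^T j 0]mxE [row j _ 0 0]mxE => ->.
by rewrite -(trmxK (u *m M^T)) trmx_mul trmxK [(_^T) 0 j]mxE.
Qed.

Lemma sum_sgF2_fiber (T : numDomainType) (x u : V) : x \in proj_range M ->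
  \sum_(y | y *m M == x) (sgF2 (dotF y u) : T) =
  sgF2 (dotF x u) * (if u \in proj_dual_range M then #|kerset M|%:R else 0).
Proof.
case/imsetP => x0 _ x_def; have xM : x *m M = x by rewrite x_def -mulmxA MM.
rewrite (reindex_inj (addIr x)) /= (eq_bigl [in kerset M]) => [|k]; last first.
  by rewrite inE mulmxDl xM -[X in _ == X]add0r (inj_eq (addIr x)).
under eq_bigr do rewrite dotFDl sgF2D.
rewrite -mulr_suml mulrC sum_sgF2_addr_closed ?kerset_orthogonal //.
exact: kerset_addr_closed.
Qed.

Lemma card_kerset_dual_range : (#|kerset M| * #|proj_dual_range M| = 2 ^ l)%N.
Proof.
apply/eqP; rewrite -(eqr_nat int); apply/eqP.
(* evaluate \sum_u \sum_(k in ker M) (-1)^(k.u) summing over u first, then k *)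
transitivity (\sum_(u : V) \sum_(k in kerset M) (sgF2 (dotF k u) : int)).
  rewrite natrM mulr_natr -sumr_const big_mkcond /=; apply: eq_bigr => u _.
  by rewrite sum_sgF2_addr_closed ?kerset_orthogonal //; exact: kerset_addr_closed.
rewrite exchange_big (bigD1 0) ?inE ?mul0mx //= sum_sgF2_dotF eqxx mul1r.
by rewrite big1 ?addr0 // => k /andP[_ nk0]; rewrite sum_sgF2_dotF (negbTE nk0) mul0r.
Qed.

End Projector.

Definition HP_eigenvalue (R : realType) (n l : nat) (P : 'M['F_2]_(n, l))
    (s : 'rV['F_2]_l) : R :=
  \sum_(a < n) sgF2 (dotF (row a P) s).

Section Expi.
Variable R : realType.
Local Open Scope classical_set_scope.

Lemma cvg_real_complex (u : nat -> R) (a : R) : u @ \oo --> a ->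
  ((fun n => (u n)%:C) : nat -> (R[i] : numFieldType)) @ \oo --> (a%:C : (R[i] : numFieldType)).
Proof.
move=> /cvgrPdist_lt u_a; apply/cvgrPdist_lt => e e0.
move: (e0); rewrite ltcE /= => /andP[/eqP Ie Re0].
apply: filterS (u_a _ Re0) => n.
by rewrite -rmorphB normc_def /= expr0n /= addr0 sqrtr_sqr ltcE /= Ie eqxx.
Qed.

Lemma expi_series_coeff (t : R) (k : nat) :
  ('i * t%:C) ^+ k / (k`!)%:R =
  (cos_coeff t k)%:C + 'i * (sin_coeff t k)%:C :> R[i].
Proof.
rewrite /cos_coeff /sin_coeff /= -(odd_double_half k); move: (odd k) (k./2) => b j.
rewrite oddD odd_double half_bit_double addbF exprMn exprD.
have -> : ('i : R[i]) ^+ j.*2 = (-1) ^+ j by rewrite -mul2n exprM sqr_i.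
case: b => /=.
- rewrite add1n /= doubleK !mul0r mul1r rmorph0 add0r expr1.
  by rewrite !rmorphM fmorphV rmorph_nat rmorphXn rmorphN1 rmorphXn !mulrA.
- rewrite add0n /= !mul0r mul1r rmorph0 mulr0 addr0 -exprnP.
  by rewrite !rmorphM fmorphV rmorph_nat rmorphXn rmorphN1 rmorphXn mul1r rmorph_nat.
Qed.

Lemma cvg_series_expi (t : R) :
  (series (fun k => ('i * t%:C) ^+ k / (k`!)%:R) : nat -> (R[i] : numFieldType))
    @ \oo --> (expi t : (R[i] : numFieldType)).
Proof.
have cos_t : series (cos_coeff t) @ \oo --> cos t.
  by rewrite cos.unlock; exact: is_cvg_series_cos_coeff.
have sin_t : series (sin_coeff t) @ \oo --> sin t.
  by rewrite sin.unlock; exact: is_cvg_series_sin_coeff.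
have -> : expi t = (cos t)%:C + 'i * (sin t)%:C.
  by apply/eqP; rewrite eq_complex /= !mul0r !mul1r !subr0 !add0r addr0 !eqxx.
rewrite [X in X @ \oo --> _](_ : _ = (fun n => (series (cos_coeff t) n)%:C
   + 'i * (series (sin_coeff t) n)%:C)); last first.
  apply/funext => n; rewrite /series /= !rmorph_sum mulr_sumr -big_split /=.
  by apply: eq_bigr => k _; rewrite expi_series_coeff.
apply: cvgD; [exact: cvg_real_complex | apply: cvgMl_tmp; exact: cvg_real_complex].
Qed.

Lemma expiD (a b : R) : expi a * expi b = expi (a + b).
Proof. by rewrite /expi cosD sinD; simpc; congr Complex; ring. Qed.

Lemma conj_expi (a : R) : conjc (expi a) = expi (- a).
Proof. by rewrite /expi /= cosN sinN. Qed.

Lemma sqr_normc (z : R[i]) : `|z| ^+ 2 = z * conjc z.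
Proof. by rewrite normCK. Qed.

Lemma expiXn (a : R) w : expi a ^+ w = expi (a *+ w).
Proof.
elim: w => [|w IHw]; first by rewrite expr0 mulr0n /expi cos0 sin0.
by rewrite exprS IHw expiD mulrS.
Qed.

End Expi.

Section Amplitude.
Variables (R : realType) (n l : nat) (P : 'M['F_2]_(n, l)).
Local Notation V := 'rV['F_2]_l.
Local Notation lam := (HP_eigenvalue R P).

Lemma Hmat_sgF2 (x s : V) :
  \sum_z Hmat R P x z * sgF2 (dotF z s) = (lam s)%:C * sgF2 (dotF x s).
Proof.
under eq_bigr do rewrite /Hmat mulr_suml.
rewrite exchange_big /= rmorph_sum mulr_suml; apply: eq_bigr => a _.
rewrite (bigD1 (x - row a P)) //= subrK eqxx mul1r big1 ?addr0 => [|z zx].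
  by rewrite dotFBl sgF2B rmorph_sgF2 mulrC.
rewrite (_ : (x == z + row a P) = false) ?mul0r //; apply/negbTE.
by apply: contra zx => /eqP ->; rewrite addrK.
Qed.

Lemma Hpow_fourier k (x : V) : Hpow R P k x 0 =
  (2 ^ l)%:R^-1 * \sum_s sgF2 (dotF x s) * (lam s)%:C ^+ k.
Proof.
elim: k x => [|k IHk] x /=.
  under eq_bigr do rewrite expr0 mulr1.
  by rewrite sum_sgF2_dotF mulrCA mulVf ?mulr1.
under eq_bigr do rewrite IHk mulrCA mulr_sumr.
rewrite -mulr_sumr exchange_big /=; congr (_ * _); apply: eq_bigr => s _.
under eq_bigr do rewrite mulrA.
by rewrite -mulr_suml Hmat_sgF2 exprS mulrCA mulrA.
Qed.

Lemma amp_fourier (theta : R) (x : V) : amp P theta x =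
  (2 ^ l)%:R^-1 * \sum_s sgF2 (dotF x s) * expi (theta * lam s).
Proof.
rewrite /amp; apply: (cvg_lim (@norm_hausdorff (R[i] : numFieldType) (R[i] : numFieldType))).
rewrite (_ : series _ = (fun m => \sum_s (2 ^ l)%:R^-1 * sgF2 (dotF x s) *
    series (fun k => ('i * (theta * lam s)%:C) ^+ k / (k`!)%:R) m)); last first.
  apply/funext => m; rewrite /series /=.
  under [RHS]eq_bigr do rewrite mulr_sumr.
  rewrite exchange_big /=; apply: eq_bigr => k _.
  rewrite Hpow_fourier !mulr_sumr; apply: eq_bigr => s _.
  by rewrite rmorphM !exprMn; ring.
rewrite mulr_sumr; apply: (@cvg_big _ _ +%R 0 xpredT) => // [|s _].
  exact: add_continuous.
by rewrite mulrA; apply: cvgMl_tmp; exact: cvg_series_expi.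
Qed.

End Amplitude.

Lemma card_colspan n' l (A : 'M['F_2]_(n', l)) : #|colspan A| = (2 ^ \rank A)%N.
Proof.
rewrite -(card_imset _ (@trmx_inj _ n' 1)).
rewrite (_ : [set c^T | c in colspan A] = rowg A^T).
  by rewrite card_rowg card_Fp // mxrank_tr.
apply/setP => u; rewrite mem_rowg; apply/imsetP/submxP.
  by case=> c /imsetP[v _ ->] ->; exists v^T; rewrite trmx_mul.
case=> D ->; exists (A *m D^T); last by rewrite trmx_mul trmxK.
by apply/imsetP; exists D^T.
Qed.

Section ColumnSpan.
Variables (T : numFieldType) (n' l : nat) (A : 'M['F_2]_(n', l)).
Local Notation V := 'rV['F_2]_l.

Lemma card_fiber_mulmx_tr (c : 'cV['F_2]_n') : c \in colspan A ->
  #|[set s : V | A *m s^T == c]| = #|[set s : V | A *m s^T == 0]|.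
Proof.
case/imsetP => v _ ->; rewrite -[RHS](card_imset _ (addIr v^T)).
congr #|pred_of_set _|; apply/setP => s; rewrite inE.
apply/idP/imsetP => [As_v | [k] ].
  by exists (s - v^T); rewrite ?subrK // inE linearB /= trmxK mulmxBr (eqP As_v) subrr.
by rewrite inE => /eqP Ak ->; rewrite linearD /= trmxK mulmxDr Ak add0r.
Qed.

(* each codeword c of C(A) is hit by the same number 2^l / 2^rank A of s *)
Lemma sum_mulmx_tr_colspan (g : 'cV['F_2]_n' -> T) :
  \sum_(s : V) g (A *m s^T) = (2 ^ l)%:R / (2 ^ \rank A)%:R * \sum_(c in colspan A) g c.
Proof.
set N := #|[set s : V | A *m s^T == 0]|.
have sum_fibers (h : 'cV['F_2]_n' -> T) :
    \sum_(s : V) h (A *m s^T) = N%:R * \sum_(c in colspan A) h c.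
  rewrite (partition_big (fun s : V => A *m s^T) (mem (colspan A))) => [|s _]; last first.
    by apply/imsetP; exists s^T.
  rewrite mulr_sumr; apply: eq_bigr => c Ac.
  rewrite /N -(card_fiber_mulmx_tr Ac) -sum1_card natr_sum mulr_suml.
  by apply: eq_big => [s|s /eqP ->]; rewrite ?inE ?mul1r.
have N_rank : (N * 2 ^ \rank A = 2 ^ l)%N.
  have /eqP := sum_fibers (fun=> 1); rewrite !sumr_const -card_colspan.
  by rewrite -natrM eqr_nat -cardsT card_rV_F2 => /eqP <-.
by rewrite sum_fibers -N_rank natrM mulfK // pnatr_eq0 expn_eq0.
Qed.

End ColumnSpan.

Lemma sum_sgF2_hweight (T : pzRingType) n' (c : 'cV['F_2]_n') :
  \sum_(i < n') (sgF2 (c i 0) : T) = n'%:R - 2 * (hweight c)%:R.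
Proof.
under eq_bigr do rewrite sgF2E.
rewrite sumrB sumr_const card_ord -mulr_sumr; congr (_ - 2 * _).
rewrite /hweight -sum1_card natr_sum [in RHS]big_mkcond /=; apply: eq_bigr => i _.
by rewrite inE; case: (_ != 0).
Qed.

Section Correlation.
Variables (R : realType) (n l : nat) (P : 'M['F_2]_(n, l)).
Local Notation V := 'rV['F_2]_l.
Local Notation lam := (HP_eigenvalue R P).

Lemma Psub_mulmx_tr (t s : V) (i : 'I_#|rows_s P t|) :
  (Psub P t *m s^T) i 0 = dotF (row (enum_val i) P) s.
Proof. by rewrite /dotF /Psub -row_rowsub -row_mul [row _ _ _ _]mxE. Qed.

(* rows a with a.t = 0 contribute equally to lam s and lam (t - s), the others
   with opposite signs *)
Lemma HP_eigenvalue_subr (s t : V) :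
  lam s - lam (t - s) = 2 * (#|rows_s P t|%:R - 2 * (hweight (Psub P t *m s^T))%:R).
Proof.
rewrite /HP_eigenvalue -sumrB (eq_bigr (fun a =>
    if a \in rows_s P t then 2 * sgF2 (dotF (row a P) s) else 0)) => [|a _].
  rewrite -big_mkcond /= -mulr_sumr (big_enum_val (fun a => sgF2 (dotF (row a P) s))) /=.
  by rewrite -sum_sgF2_hweight; congr (_ * _); apply: eq_bigr => i _; rewrite Psub_mulmx_tr.
rewrite dotFBr sgF2B inE; case: (F2_cases (dotF (row a P) t)) => ->.
  by rewrite sgF2_0 mul1r subrr.
by rewrite sgF2_1 mulN1r opprK eqxx /= mulr_natl mulr2n.
Qed.

Lemma sum_expi_correlation (theta : R) (t : V) :
  \sum_s expi (theta * lam s) * conjc (expi (theta * lam (t - s))) =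
  (2 ^ l)%:R * alpha (Psub P t) (2 * theta).
Proof.
rewrite (eq_bigr (fun s => expi (2 * theta * #|rows_s P t|%:R) *
   expi (- (2 * (2 * theta))) ^+ hweight (Psub P t *m s^T))) => [|s _]; last first.
  rewrite conj_expi expiD expiXn expiD; congr expi.
  by rewrite -mulrBr HP_eigenvalue_subr -mulr_natr; ring.
rewrite -mulr_sumr (sum_mulmx_tr_colspan _ (fun c => expi (- (2 * (2 * theta))) ^+ hweight c)).
by rewrite /alpha /weight_enum [(2 ^ \rank _)%:R]natrX; ring.
Qed.

Lemma probX_fourier (theta : R) (y : V) : probX P theta y =
  (2 ^ l)%:R^-1 * \sum_u sgF2 (dotF y u) * alpha (Psub P u) (2 * theta).
Proof.
pose E s := expi (theta * lam s).
rewrite /probX sqr_normc amp_fourier rmorphM fmorphV rmorph_nat rmorph_sum.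
under [X in _ * (_ * X)]eq_bigr do rewrite rmorphM rmorph_sgF2.
rewrite mulrACA -mulrA; congr (_ * _).
transitivity ((2 ^ l)%:R^-1 *
  \sum_u sgF2 (dotF y u) * \sum_s E s * conjc (E (u - s))); last first.
  under eq_bigr do rewrite sum_expi_correlation mulrCA.
  by rewrite -mulr_sumr mulKf // pnatr_eq0 expn_eq0.
(* substitute t = u - s in the double sum over (s, t) *)
congr (_ * _); transitivity (\sum_s \sum_u sgF2 (dotF y s) * E s *
  (sgF2 (dotF y (u - s)) * conjc (E (u - s)))).
  by rewrite mulr_suml; apply: eq_bigr => s _; rewrite mulr_sumr (reindex_inj (addIr (- s))).
rewrite exchange_big /=; apply: eq_bigr => u _; rewrite mulr_sumr; apply: eq_bigr => s _.
have -> : dotF y u = dotF y s + dotF y (u - s) by rewrite -dotFDr addrC subrK.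
by rewrite sgF2D /E; ring.
Qed.

End Correlation.

Theorem proposition5 (R : realType) (n l : nat) (P : 'M['F_2]_(n, l))
    (theta : R) (M : 'M['F_2]_l) :
  M *m M = M ->
  forall x : 'rV['F_2]_l, x \in proj_range M ->
    marginal P theta M x =
    (#|proj_dual_range M|%:R)^-1 *
    \sum_(s in proj_dual_range M)
       (-1) ^+ (dotF x s == 1) * alpha (Psub P s) (2 * theta).
Proof.
move=> MM x Rx.
have card_dual := card_kerset_dual_range MM.
have /norP[K0 D0] : ~~ [|| #|kerset M| == 0 | #|proj_dual_range M| == 0]%N.
  by rewrite -muln_eq0 card_dual expn_eq0.
rewrite /marginal (eq_bigr _ (fun y _ => probX_fourier P theta y)) -mulr_sumr.
rewrite exchange_big /=.
under eq_bigr do rewrite -mulr_suml sum_sgF2_fiber //.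
rewrite -card_dual natrM [in RHS]big_mkcond !mulr_sumr; apply: eq_bigr => u _.
case: ifP => _; last by rewrite !(mulr0, mul0r).
by rewrite /sgF2; field; rewrite !pnatr_eq0 K0 D0.
Qed.
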